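(* Normalize $\operatorname{var}(X)=1$ and $\operatorname{var}(W_1)=I_{d_1}$, and suppose $\operatorname{var}(Y,X,W_1)$ is positive definite. Let $r_X,r_Y,c\in\mathbb R^{d_1}$ and $b\ne\beta_{\text{med}}$. Then $b\in\mathcal B(r_X,r_Y,c)$ if and only if there exists $z\in\mathbb R\setminus\{0\}$ such that $k_1-bk_0=r_Y'\big(z\sqrt{1-\|c\|^2}(\sigma_{W_1,Y}-b\sigma_{W_1,X})-(k_1-bk_0)c\big)$, $z=r_X'\big(\sqrt{1-\|c\|^2}\sigma_{W_1,X}-cz\big)$, $z^2<k_0$, $(b-\beta_{\text{med}})^2<\text{devsq}(z)$, and $\|c\|^2<1$.
   Context: For random vectors $A,B$ with $\operatorname{var}(B)$ invertible, $A^{\perp B}=A-\operatorname{cov}(A,B)\operatorname{var}(B)^{-1}B$. $\sigma_{A,B}=\operatorname{cov}(A,B)$. $\beta_{\text{med}}$ is the coefficient on $X$ in the linear projection of $Y$ on $(1,X,W_1)$. $k_0=\operatorname{var}(X^{\perp W_1})$, $k_1=\operatorname{cov}(Y^{\perp W_1},X^{\perp W_1})$; $\text{devsq}(z)=\frac{\operatorname{var}(Y^{\perp X,W_1})}{k_0}\frac{z^2}{k_0-z^2}$. For $r_X,r_Y,c\in\mathbb R^{d_1}$, $\mathcal B(r_X,r_Y,c)$ is the set of $b\in\mathbb R$ such that for some $(p_1,g_1)\in\mathbb R^{d_1}\times\mathbb R^{d_1}$ (with $\Sigma_{\text{obs}}=\operatorname{var}(W_1)$): $\operatorname{cov}(Y,X)=b\operatorname{var}(X)+g_1'(\Sigma_{\text{obs}}+cr_X'+r_Yc'+r_Yr_X')p_1$;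 $\operatorname{cov}(Y,W_1)=b\operatorname{cov}(X,W_1)+g_1'(\Sigma_{\text{obs}}+r_Yc')$; $\operatorname{cov}(X,W_1)=p_1'(\Sigma_{\text{obs}}+r_Xc')$; $\operatorname{var}(Y)>b^2\operatorname{var}(X)+g_1'(\Sigma_{\text{obs}}+r_Yr_Y'+2r_Yc')g_1+2bg_1'(\Sigma_{\text{obs}}+cr_X'+r_Yc'+r_Yr_X')p_1$; $\operatorname{var}(X)>p_1'(\Sigma_{\text{obs}}+2r_Xc'+r_Xr_X')p_1$; $1>c'\Sigma_{\text{obs}}^{-1}c$. *)

(* The population second moments of (Y, X, W_1) are represented
   by the entries of their joint covariance matrix. *)
From HB Require Import structures.
From mathcomp Require Import all_boot all_order all_algebra.
Set Implicit Arguments. Unset Strict Implicit. Unset Printing Implicit Defensive.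
Import Order.TTheory GRing.Theory Num.Theory.
Local Open Scope ring_scope.

Section Defs.
Variables (R : rcfType) (d : nat).
(* second moments:
   vY = var(Y), vX = var(X), sYX = cov(Y,X),
   sWY = sigma_{W1,Y} = cov(W1,Y) (column), sWX = sigma_{W1,X} (column),
   SW = var(W1) = Sigma_obs. *)
Variables (vY sYX vX : R) (sWY sWX : 'cV[R]_d) (SW : 'M[R]_d).

Definition sc (A : 'M[R]_1) : R := A ord0 ord0.

Definition jointCov : 'M[R]_(1 + (1 + d)) :=
  block_mx (vY%:M : 'M_1) (row_mx (sYX%:M : 'M_1) sWY^T)
           (col_mx (sYX%:M : 'M_1) sWY)
           (block_mx (vX%:M : 'M_1) sWX^T sWX SW).

Definition posdef n (M : 'M[R]_n) : Prop :=
  forall v : 'cV[R]_n, v != 0 -> 0 < sc (v^T *m M *m v).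

Definition varXW : 'M[R]_(1 + d) := block_mx (vX%:M : 'M_1) sWX^T sWX SW.
Definition covXWY : 'cV[R]_(1 + d) := col_mx (sYX%:M : 'M_1) sWY.

(* coefficient on X in the linear projection of Y on (1, X, W1) *)
Definition beta_med : R :=
  (invmx varXW *m covXWY) (lshift d (ord0 : 'I_1)) ord0.

Definition varYres : R := vY - sc (covXWY^T *m invmx varXW *m covXWY).

Definition k0 : R := vX - sc (sWX^T *m invmx SW *m sWX).
Definition k1 : R := sYX - sc (sWY^T *m invmx SW *m sWX).

Definition devsq (z : R) : R := varYres / k0 * (z ^+ 2 / (k0 - z ^+ 2)).

Definition inB (rX rY c : 'cV[R]_d) (b : R) : Prop :=
  exists p1 g1 : 'cV[R]_d,
  [/\ sYX = b * vX
            + sc (g1^T *m (SW + c *m rX^T + rY *m c^T + rY *m rX^T) *m p1),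
      sWY^T = b *: sWX^T + g1^T *m (SW + rY *m c^T) &
      sWX^T = p1^T *m (SW + rX *m c^T)] /\
  [/\
      b ^+ 2 * vX + sc (g1^T *m (SW + rY *m rY^T + 2%:R *: (rY *m c^T)) *m g1)
        + 2%:R * b * sc (g1^T *m (SW + c *m rX^T + rY *m c^T + rY *m rX^T) *m p1)
        < vY,
      sc (p1^T *m (SW + 2%:R *: (rX *m c^T) + rX *m rX^T) *m p1) < vX &
      sc (c^T *m invmx SW *m c) < 1].
End Defs.

From HB Require Import structures.
From mathcomp Require Import all_boot all_order all_algebra ring lra.
Import Order.TTheory GRing.Theory Num.Theory.
Local Open Scope ring_scope.
Set Implicit Arguments. Unset Strict Implicit. Unset Printing Implicit Defensive.

(* With var(W1) = I, the linear constraints of B(rX, rY, c) read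
   sWX = p1 + t c and sWY - b sWX = g1 + s c with t = rX'p1 and s = rY'g1, so
   p1 and g1 are determined by two scalars t, s solving fixed-point equations.
   Every quadratic constraint then only sees t and s: the X-variance bound
   becomes |sWX|^2 + t^2 (1 - |c|^2) < 1, the covariance equation becomes
   k1 - b k0 = z w with z = t sqrt(1 - |c|^2) and w = s sqrt(1 - |c|^2), and,
   given that identity, the Y-variance bound is equivalent to
   (b - beta_med)^2 < devsq z. *)

Section DotProduct.
Variables (R : rcfType) (d : nat).
Implicit Types (x y u w : 'cV[R]_d) (A B : 'M[R]_1).

Definition dot x y : R := sc (x^T *m y).

Lemma scD A B : sc (A + B) = sc A + sc B. Proof. by rewrite /sc mxE. Qed.
Lemma scN A : sc (- A) = - sc A. Proof. by rewrite /sc mxE. Qed.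
Lemma scZ (k : R) A : sc (k *: A) = k * sc A. Proof. by rewrite /sc mxE. Qed.
Lemma scM A B : sc (A *m B) = sc A * sc B.
Proof. by rewrite /sc mxE big_ord1. Qed.
Lemma sc_scalar (k : R) : sc k%:M = k. Proof. by rewrite /sc mxE eqxx mulr1n. Qed.
Lemma sc_tr A : sc A^T = sc A. Proof. by rewrite /sc mxE. Qed.
Lemma sc_inj : injective (@sc R).
Proof. by move=> A B eqAB; rewrite (mx11_scalar A) (mx11_scalar B); congr _%:M. Qed.

Lemma dotC x y : dot x y = dot y x.
Proof. by rewrite /dot -sc_tr trmx_mul trmxK. Qed.
Lemma dotDl x y w : dot (x + y) w = dot x w + dot y w.
Proof. by rewrite /dot linearD mulmxDl scD. Qed.
Lemma dotDr x y w : dot w (x + y) = dot w x + dot w y.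
Proof. by rewrite /dot mulmxDr scD. Qed.
Lemma dotNl x y : dot (- x) y = - dot x y.
Proof. by rewrite /dot linearN mulNmx scN. Qed.
Lemma dotNr x y : dot y (- x) = - dot y x.
Proof. by rewrite /dot mulmxN scN. Qed.
Lemma dotZl (k : R) x y : dot (k *: x) y = k * dot x y.
Proof. by rewrite /dot linearZ /= -scalemxAl scZ. Qed.
Lemma dotZr (k : R) x y : dot y (k *: x) = k * dot y x.
Proof. by rewrite /dot -scalemxAr scZ. Qed.

Lemma sc_formD x y (M N : 'M[R]_d) :
  sc (x^T *m (M + N) *m y) = sc (x^T *m M *m y) + sc (x^T *m N *m y).
Proof. by rewrite mulmxDr mulmxDl scD. Qed.
Lemma sc_form1 x y : sc (x^T *m 1%:M *m y) = dot x y.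
Proof. by rewrite mulmx1. Qed.
Lemma sc_formZ x y (k : R) (M : 'M[R]_d) :
  sc (x^T *m (k *: M) *m y) = k * sc (x^T *m M *m y).
Proof. by rewrite -scalemxAr -scalemxAl scZ. Qed.
Lemma sc_form_rank1 x y u w : sc (x^T *m (u *m w^T) *m y) = dot x u * dot w y.
Proof. by rewrite mulmxA -(mulmxA _ w^T) scM. Qed.

Lemma mul_tr_1_rank1 x u w : x^T *m (1%:M + u *m w^T) = (x + dot x u *: w)^T.
Proof.
by rewrite mulmxDr mulmx1 mulmxA [x^T *m u]mx11_scalar mul_scalar_mx linearD linearZ.
Qed.

Lemma cross_formE g p r q c :
  sc (g^T *m (1%:M + c *m q^T + r *m c^T + r *m q^T) *m p) =
  dot (g + dot g r *: c) (p + dot p q *: c) + dot g r * dot p q * (1 - dot c c).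
Proof.
rewrite !sc_formD sc_form1 !sc_form_rank1 (dotC q p).
rewrite !(dotDl, dotDr, dotZl, dotZr); ring.
Qed.

Lemma sq_formE g r c :
  sc (g^T *m (1%:M + r *m r^T + 2%:R *: (r *m c^T)) *m g) =
  dot (g + dot g r *: c) (g + dot g r *: c) + dot g r ^+ 2 * (1 - dot c c).
Proof.
rewrite !sc_formD sc_form1 sc_formZ !sc_form_rank1 (dotC r g) (dotC c g).
rewrite !(dotDl, dotDr, dotZl, dotZr) (dotC c g); ring.
Qed.

Lemma residual_sq_expand (b : R) y a :
  b ^+ 2 + dot (y - b *: a) (y - b *: a) + 2%:R * b * dot (y - b *: a) a =
  dot y y + b ^+ 2 * (1 - dot a a).
Proof. rewrite !(dotDl, dotDr, dotNl, dotNr, dotZl, dotZr) (dotC a y); ring. Qed.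

Lemma dot_fixpoint_scale (S : R) {t : R} {r a c : 'cV[R]_d} : S != 0 ->
  t * S = dot r (S *: a - (t * S) *: c) <-> t = dot r (a - t *: c).
Proof.
move=> S0; rewrite (mulrC t) -scalerA -scalerBr dotZr !(mulrC S).
by split=> [/(mulIf S0) | {1}->].
Qed.

End DotProduct.

Section NormalizedMoments.
Variables (R : rcfType) (d : nat).
Variables (vY sYX : R) (sWY sWX : 'cV[R]_d).

Lemma k0E : k0 1 sWX 1%:M = 1 - dot sWX sWX.
Proof. by rewrite /k0 invmx1 sc_form1. Qed.
Lemma k1E : k1 sYX sWY sWX 1%:M = sYX - dot sWY sWX.
Proof. by rewrite /k1 invmx1 sc_form1. Qed.

Lemma posdef_k0_gt0 : posdef (jointCov vY sYX 1 sWY sWX 1%:M) -> 0 < 1 - dot sWX sWX.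
Proof.
move/(_ (col_mx 0 (col_mx 1%:M (- sWX)))).
have one_neq0 : (1%:M : 'cV[R]_1) != 0.
  by apply: contraNneq (oner_neq0 R) => /(congr1 (@sc R))/eqP; rewrite sc_scalar /sc mxE.
rewrite !col_mx_eq0 eqxx (negPf one_neq0) andbF => /(_ isT).
rewrite /jointCov !tr_col_mx tr_scalar_mx linear0 linearN /=.
rewrite !(mul_row_block, mul_row_col, mul0mx, mulmx0, add0r, addr0, mul1mx, mulmx1).
by rewrite subrr mul0mx addr0 scD sc_scalar mulNmx scN.
Qed.

Hypothesis k0_gt0 : 0 < 1 - dot sWX sWX.

Let beta := (sYX - dot sWY sWX) / (1 - dot sWX sWX).

Lemma invmx_varXW_covXWY :
  invmx (varXW 1 sWX 1%:M) *m covXWY sYX sWY = col_mx beta%:M (sWY - beta *: sWX).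
Proof.
have k0_neq0 : 1 - dot sWX sWX != 0 by rewrite gt_eqF.
pose k := (1 - dot sWX sWX)^-1.
(* Inverse of var(X, W1) by block elimination; its Schur complement is k0. *)
pose M : 'M[R]_(1 + d) :=
  block_mx k%:M (- (k *: sWX^T)) (- (k *: sWX)) (1%:M + k *: (sWX *m sWX^T)).
have MV : M *m varXW 1 sWX 1%:M = 1%:M.
  rewrite /M /varXW mulmx_block [RHS]scalar_mx_block; congr block_mx.
  - apply: sc_inj; rewrite scD scM !sc_scalar mulNmx scN -scalemxAl scZ.
    by rewrite /k -/(dot _ _); field.
  - by rewrite mul_scalar_mx mulNmx mulmx1 addrN.
  - rewrite mulNmx mulmx1 mulmxDl mul1mx -scalemxAl -mulmxA [sWX^T *m sWX]mx11_scalar.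
    rewrite -/(sc _) -/(dot _ _) mul_mx_scalar.
    by apply/matrixP => i j; rewrite !mxE /k; field.
  - by rewrite mulNmx mulmx1 -scalemxAl addrCA addNr addr0.
have [_ V_unit] := mulmx1_unit MV.
suff -> : covXWY sYX sWY = varXW 1 sWX 1%:M *m col_mx beta%:M (sWY - beta *: sWX).
  by rewrite mulKmx.
rewrite /varXW /covXWY mul_block_col; congr col_mx.
- apply: sc_inj; rewrite scD scM !sc_scalar mulmxDr scD mulmxN scN -scalemxAr scZ.
  by rewrite -/(dot _ _) -/(dot _ _) (dotC sWX sWY) /beta; field.
- by rewrite mul_mx_scalar mul1mx addrC subrK.
Qed.

Lemma beta_medE : beta_med sYX 1 sWY sWX 1%:M = beta.
Proof. by rewrite /beta_med invmx_varXW_covXWY col_mxEu mxE eqxx mulr1n. Qed.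

Lemma k1_sub_k0_neq0 (b : R) :
  b != beta -> sYX - dot sWY sWX - b * (1 - dot sWX sWX) != 0.
Proof.
apply: contra => /eqP kb0; rewrite /beta (_ : sYX - dot sWY sWX = b * (1 - dot sWX sWX)).
  by rewrite mulfK // gt_eqF.
by apply/eqP; rewrite -subr_eq0 kb0.
Qed.

Lemma varYresE :
  varYres vY sYX 1 sWY sWX 1%:M = (vY - dot sWY sWY) - beta * (sYX - dot sWY sWX).
Proof.
rewrite /varYres -mulmxA invmx_varXW_covXWY /covXWY tr_col_mx tr_scalar_mx.
rewrite mul_row_col scD scM !sc_scalar -/(dot _ _) dotDr dotNr dotZr.
by rewrite /beta; field; rewrite gt_eqF.
Qed.

End NormalizedMoments.

Lemma inB_scalarE (R : rcfType) (d : nat) vY sYX (sWY sWX rX rY c : 'cV[R]_d) b :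
  inB vY sYX 1 sWY sWX 1%:M rX rY c b <->
  dot c c < 1 /\ exists t s : R,
  [/\ t = dot rX (sWX - t *: c),
      s = dot rY (sWY - b *: sWX - s *: c),
      sYX - dot sWY sWX - b * (1 - dot sWX sWX) = t * s * (1 - dot c c),
      dot sWX sWX + t ^+ 2 * (1 - dot c c) < 1 &
      s ^+ 2 * (1 - dot c c) <
        vY - dot sWY sWY + b ^+ 2 * (1 - dot sWX sWX) - 2%:R * b * (sYX - dot sWY sWX)].
Proof.
rewrite /inB invmx1 sc_form1.
set h := sWY - b *: sWX.
have shiftE x e r : e^T = x^T *m (1%:M + r *m c^T) <-> x = e - dot x r *: c.
  by rewrite mul_tr_1_rank1; split=> [/trmx_inj -> | {1}->]; rewrite ?addrK ?subrK.
have sWYE M : sWY^T = b *: sWX^T + M <-> h^T = M.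
  rewrite /h linearB linearZ /=.
  by split=> [-> | <-]; [rewrite addrAC subrr add0r | rewrite addrC subrK].
have residual := residual_sq_expand b sWY sWX; rewrite -/h in residual.
have hsWX : dot h sWX = dot sWY sWX - b * dot sWX sWX.
  by rewrite /h dotDl dotNl dotZl.
split.
- case=> p [g [[EC /sWYE/shiftE Eg /shiftE Ep] [IY IX cc]]]; split=> //.
  rewrite cross_formE sq_formE in EC IY; rewrite addrAC sq_formE in IX.
  set t := dot p rX in Ep EC IY IX; set s := dot g rY in Eg EC IY.
  have Ea : p + t *: c = sWX by rewrite {1}Ep subrK.
  have Eh : g + s *: c = h by rewrite {1}Eg subrK.
  rewrite Ea Eh in EC IY IX.
  exists t, s; split=> //.
  + by rewrite -Ep dotC.
  + by rewrite -Eg dotC.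
  + by rewrite EC hsWX; ring.
  + by move: IY residual; rewrite EC hsWX; lra.
- case=> cc [t [s [Et Es Ek IX IY]]].
  exists (sWX - t *: c), (h - s *: c).
  have pt : dot (sWX - t *: c) rX = t by rewrite dotC -Et.
  have gs : dot (h - s *: c) rY = s by rewrite dotC -Es.
  rewrite cross_formE sq_formE (addrAC 1%:M) sq_formE pt gs !subrK.
  split; split=> //.
  + by rewrite hsWX (mulrC s t) -Ek; ring.
  + by apply/sWYE/shiftE; rewrite gs.
  + by apply/shiftE; rewrite pt.
  + by move: IY residual; rewrite hsWX (mulrC s t) -Ek; lra.
Qed.

Lemma devsq_ltE (R : rcfType) (k0 k1 b z w Q : R) :
  0 < k0 -> z ^+ 2 < k0 -> z != 0 -> k1 - b * k0 = z * w ->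
  ((b - k1 / k0) ^+ 2 < (Q - k1 / k0 * k1) / k0 * (z ^+ 2 / (k0 - z ^+ 2)))
  = (w ^+ 2 < Q + b ^+ 2 * k0 - 2%:R * b * k1).
Proof.
move=> k0_gt0 z2_lt z_neq0 Ek1.
have k0_neq0 : k0 != 0 by rewrite gt_eqF.
have kz_gt0 : 0 < k0 - z ^+ 2 by rewrite subr_gt0.
have -> : k1 = b * k0 + z * w by rewrite -Ek1; ring.
rewrite -subr_gt0 -[RHS]subr_gt0.
have -> : (Q - (b * k0 + z * w) / k0 * (b * k0 + z * w)) / k0 * (z ^+ 2 / (k0 - z ^+ 2))
   - (b - (b * k0 + z * w) / k0) ^+ 2
   = z ^+ 2 / (k0 * (k0 - z ^+ 2)) *
     (Q + b ^+ 2 * k0 - 2%:R * b * (b * k0 + z * w) - w ^+ 2).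
  by field; rewrite k0_neq0 gt_eqF.
have z2_gt0 : 0 < z ^+ 2 by rewrite lt_def sqrf_eq0 z_neq0 sqr_ge0.
by rewrite pmulr_rgt0 // divr_gt0 // mulr_gt0.
Qed.

Theorem mainTheorem17 (R : rcfType) (d : nat)
    (vY sYX vX : R) (sWY sWX : 'cV[R]_d) (SW : 'M[R]_d)
    (rX rY c : 'cV[R]_d) (b : R) :
  vX = 1 ->
  SW = 1%:M ->
  posdef (jointCov vY sYX vX sWY sWX SW) ->
  b != beta_med sYX vX sWY sWX SW ->
  inB vY sYX vX sWY sWX SW rX rY c b <->
  exists z : R,
    z != 0 /\
    [/\
        k1 sYX sWY sWX SW - b * k0 vX sWX SW =
          sc (rY^T *m ((z * Num.sqrt (1 - sc (c^T *m c))) *: (sWY - b *: sWX)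
                 - (k1 sYX sWY sWX SW - b * k0 vX sWX SW) *: c)),
        z = sc (rX^T *m (Num.sqrt (1 - sc (c^T *m c)) *: sWX - z *: c)),
        z ^+ 2 < k0 vX sWX SW,
        (b - beta_med sYX vX sWY sWX SW) ^+ 2
          < devsq vY sYX vX sWY sWX SW z &
        sc (c^T *m c) < 1].
Proof.
move=> -> -> /posdef_k0_gt0 k0_gt0 b_neq_beta.
rewrite beta_medE // in b_neq_beta; have kb_neq0 := k1_sub_k0_neq0 k0_gt0 b_neq_beta.
rewrite inB_scalarE /devsq varYresE // beta_medE // k0E k1E -/(dot c c).
set S := Num.sqrt _; set kb := sYX - _ - _ in kb_neq0 *.
have SS (cc : dot c c < 1) : S ^+ 2 = 1 - dot c c by rewrite sqr_sqrtr // subr_ge0 ltW.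
have S_neq0 (cc : dot c c < 1) : S != 0 by rewrite gt_eqF // sqrtr_gt0 subr_gt0.
split.
- case=> cc [t [s [Et Es Ek IX IY]]].
  have Ezw : kb = t * S * (s * S) by rewrite Ek -SS //; ring.
  have tS_neq0 : t * S != 0 by apply: contraNneq kb_neq0; rewrite Ezw => ->; rewrite mul0r.
  exists (t * S); split=> //; split=> //.
  + rewrite Ezw (_ : t * S * (s * S) = s * (t * S * S)); last by ring.
    exact/(dot_fixpoint_scale (mulf_neq0 tS_neq0 (S_neq0 cc))).
  + exact/(dot_fixpoint_scale (S_neq0 cc)).
  + by rewrite exprMn SS //; lra.
  + rewrite (devsq_ltE _ k0_gt0 _ tS_neq0 Ezw) exprMn SS //; lra.
- case=> z [z_neq0 [E1 E2 z2_lt Edev cc]]; split=> //.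
  have [t Ez] : exists t, z = t * S by exists (z / S); rewrite divfK ?S_neq0.
  have tSS_neq0 : t * S * S != 0 by rewrite mulf_neq0 -?Ez ?S_neq0.
  have [s Es] : exists s, kb = s * (t * S * S) by exists (kb / (t * S * S)); rewrite divfK.
  have Ezw : kb = t * S * (s * S) by rewrite Es; ring.
  rewrite Ez in E1 E2 z2_lt z_neq0 Edev.
  rewrite (devsq_ltE _ k0_gt0 z2_lt z_neq0 Ezw) exprMn SS // in Edev.
  rewrite exprMn SS // in z2_lt.
  exists t, s; split; [ | | by rewrite Es -SS //; ring | lra | lra].
  + exact/(dot_fixpoint_scale (S_neq0 cc)).
  + by move: E1; rewrite Es => /(dot_fixpoint_scale tSS_neq0).
Qed.
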